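(* Let $\mathbb V$ be a $k$-module over $\mathbb W$ admitting a multiplicative basis $\mathfrak B=\{v_i\}_{i\in I}$ with respect to the basis $\mathfrak B'=\{w_j\}_{j\in J}$ of $\mathbb W$. If $\mathbb V$ is simple, then any two elements of $I$ are connected (i.e. $I/\sim$ has exactly one class).
   Context: Fix integers $n\ge 2$ and $1\le k\le n$ and an arbitrary field $\mathbb F$; $S_n$ denotes the symmetric group on $n$ letters. A $k$-module over a linear space $\mathbb W$ is an $\mathbb F$-vector space $\mathbb V$ (the dimensions of $\mathbb V$ and $\mathbb W$ are arbitrary, possibly infinite) together with, for every $\sigma\in S_n$, an $n$-linear map $\mathbb V^k\times\mathbb W^{n-k}\to\mathbb V$, $(x_1,\dots,x_k,y_{k+1},\dots,y_n)\mapsto[x_1,\dots,x_k,y_{k+1},\dots,y_n]_\sigma$ (interpreted as an $n$-ary bracket in which the $l$-th argument is placed in position $\sigma(l)$). A $k$-submodule of $\mathbb V$ is a linear subspace $U$ such that $[u,x_2,\dots,x_k,y_{k+1},\dots,y_n]_\sigma\in U$ for all $\sigma\in S_n$, $u\in U$, $x_l\in\mathbb V$, $y_l\in\mathbb W$. $\mathbb V$ is simple if its only $k$-submodules are $\{0\}$ and $\mathbb V$. A basis $\mathfrak B=\{v_i\}_{i\in I}$ of $\mathbb V$ is multiplicative (with respect to a basis $\mathfrak B'=\{w_j\}_{j\in J}$ of $\mathbb W$) if for all $\sigma\in S_n$, $i_1,\dots,i_k\in I$, $j_{k+1},\dots,j_n\in J$, the element $[v_{i_1},\dots,v_{i_k},w_{j_{k+1}},\dots,w_{j_n}]_\sigma$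 lies in $\mathbb F v_r$ for some $r\in I$. Index machinery: let $\overline I=\{\overline i:i\in I\}$ and $\overline J=\{\overline j:j\in J\}$ be sets of new symbols disjoint from $I$ and $J$, with the convention $\overline{\overline x}=x$. For $\sigma\in S_n$, $i_1,\dots,i_k\in I$, $j_{k+1},\dots,j_n\in J$, let $a_\sigma(i_1,\dots,i_k,j_{k+1},\dots,j_n)=\emptyset$ if $[v_{i_1},\dots,v_{i_k},w_{j_{k+1}},\dots,w_{j_n}]_\sigma=0$ and $=\{r\}$ if this bracket is a nonzero element of $\mathbb F v_r$. For $i,i_2,\dots,i_k\in I$, $j_{k+1},\dots,j_n\in J$ let $b_\sigma(i,\overline i_2,\dots,\overline i_k,\overline j_{k+1},\dots,\overline j_n)=\{i'\in I: a_\sigma(i',i_2,\dots,i_k,j_{k+1},\dots,j_n)=\{i\}\}$. For $i\in I$, $X=(x_2,\dots,x_k)\in(I\,\dot\cup\,\overline I)^{k-1}$, $Y=(y_{k+1},\dots,y_n)\in(J\,\dot\cup\,\overline J)^{n-k}$ define $\mu(i,X,Y)\subseteq I$ by: $\mu(i,X,Y)=\bigcup_{\sigma\in S_n}a_\sigma(i,X,Y)$ if all $x_l\in I$ and all $y_l\in J$; $\mu(i,X,Y)=\bigcup_{\sigma\in S_n}b_\sigma(i,X,Y)$ if all $x_l\in\overline I$ and all $y_l\in\overline J$; and $\mu(i,X,Y)=\emptyset$ otherwise. For $\mathfrak A\subseteq I$ set $\phi(\mathfrak A,X,Y)=\bigcup_{i\in\mathfrak A}\mu(i,X,Y)$. Connections: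 for distinct $i,i'\in I$, a connection from $i$ to $i'$ is a finite sequence $(X_1,Y_1,\dots,X_t,Y_t)$, $t\ge1$, with $X_m\in(I\,\dot\cup\,\overline I)^{k-1}$ and $Y_m\in(J\,\dot\cup\,\overline J)^{n-k}$, such that, setting $\mathfrak A_0=\{i\}$ and $\mathfrak A_m=\phi(\mathfrak A_{m-1},X_m,Y_m)$, one has $\mathfrak A_m\neq\emptyset$ for $1\le m\le t-1$ and $i'\in\mathfrak A_t$. We say $i$ is connected to $i'$ if such a connection exists; by convention every $i\in I$ is connected to itself. This relation, written $i\sim i'$, is an equivalence relation on $I$. *)

From HB Require Import structures.
From mathcomp Require Import all_boot all_order all_algebra all_fingroup.
Set Implicit Arguments.
Unset Strict Implicit.
Unset Printing Implicit Defensive.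
Import GRing.Theory.
Local Open Scope ring_scope.

Definition upd (T : Type) (m : nat) (f : 'I_m -> T) (l : 'I_m) (a : T) : 'I_m -> T :=
  fun l' => if l' == l then a else f l'.

Definition kcons (T : Type) (km1 : nat) (x0 : T) (xs : 'I_km1 -> T) : 'I_km1.+1 -> T :=
  fun l => match unlift ord0 l with None => x0 | Some m => xs m end.

Section KModules.
Variables (F : fieldType) (V W : lmodType F) (n km1 : nat).
(* k = km1.+1 ;  a k-module structure: for every sigma in S_n an n-linear map
   V^k x W^(n-k) -> V *)
Variable br : 'S_n -> ('I_km1.+1 -> V) -> ('I_(n - km1.+1) -> W) -> V.

Definition multilinear : Prop :=
  (forall s x y l (a : F) u u',
      br s (upd x l (a *: u + u')) y = a *: br s (upd x l u) y + br s (upd x l u') y) /\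
  (forall s x y l (a : F) u u',
      br s x (upd y l (a *: u + u')) = a *: br s x (upd y l u) + br s x (upd y l u')).

Definition is_submodule (U : V -> Prop) : Prop :=
  U 0 /\ (forall (a : F) x y, U x -> U y -> U (a *: x + y)) /\
  (forall s u (xs : 'I_km1 -> V) y, U u -> U (br s (kcons u xs) y)).

Definition is_simple : Prop :=
  forall U, is_submodule U -> (forall x, U x <-> x = 0) \/ (forall x, U x).

Variables (I J : Type) (v : I -> V) (w : J -> W).

Definition multiplicative : Prop :=
  forall s (ix : 'I_km1.+1 -> I) (js : 'I_(n - km1.+1) -> J),
    exists (r : I) (c : F), br s (v \o ix) (w \o js) = c *: v r.

(* a_sigma(i_1..i_k, j_{k+1}..j_n) = {r} *)
Definition a_sigma s (ix : 'I_km1.+1 -> I) (js : 'I_(n - km1.+1) -> J) (r : I) : Prop :=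
  br s (v \o ix) (w \o js) <> 0 /\ exists c : F, br s (v \o ix) (w \o js) = c *: v r.

(* barred symbols are encoded by [inr] *)
Definition mu (i : I) (X : 'I_km1 -> I + I) (Y : 'I_(n - km1.+1) -> J + J) (r : I) : Prop :=
  (exists (Xs : 'I_km1 -> I) (Ys : 'I_(n - km1.+1) -> J),
      (forall l, X l = inl (Xs l)) /\ (forall l, Y l = inl (Ys l)) /\
      exists s, a_sigma s (kcons i Xs) Ys r) \/
  (exists (Xs : 'I_km1 -> I) (Ys : 'I_(n - km1.+1) -> J),
      (forall l, X l = inr (Xs l)) /\ (forall l, Y l = inr (Ys l)) /\
      exists s, a_sigma s (kcons r Xs) Ys i).

Definition phi (A : I -> Prop) X Y (r : I) : Prop := exists i, A i /\ mu i X Y r.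

Definition step := (('I_km1 -> I + I) * ('I_(n - km1.+1) -> J + J))%type.

Fixpoint conn_seq (A : I -> Prop) (s : seq step) (i' : I) : Prop :=
  match s with
  | [::] => False
  | p :: s' =>
      match s' with
      | [::] => phi A p.1 p.2 i'
      | _ :: _ => (exists r, phi A p.1 p.2 r) /\ conn_seq (phi A p.1 p.2) s' i'
      end
  end.

Definition connected (i i' : I) : Prop :=
  i = i' \/ exists s : seq step, conn_seq (fun x => x = i) s i'.

End KModules.

Definition is_basis (F : fieldType) (V : lmodType F) (I : Type) (v : I -> V) : Prop :=
  (forall x : V, exists m (f : 'I_m -> I) (c : 'I_m -> F),
      x = \sum_(l < m) c l *: v (f l)) /\
  (forall m (f : 'I_m -> I) (c : 'I_m -> F), injective f ->
      \sum_(l < m) c l *: v (f l) = 0 -> forall l, c l = 0).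

From Pilot Require Import Defs.
From HB Require Import structures.
From mathcomp Require Import all_boot all_order all_algebra all_fingroup.
From mathcomp Require Import boolp.

(* Fix i and let U_i be the span of the basis vectors v_j with j connected to i.
   U_i is a k-submodule: by multilinearity it is enough to bracket basis vectors
   whose first argument is some v_j with j ~ i, and such a bracket is either 0 or
   a nonzero multiple of some v_r, which makes r ~ i through one more step of the
   connection.  Since v_i is a nonzero vector of U_i, simplicity forces U_i = V;
   writing v_i' in U_i and comparing coordinates in the basis gives i ~ i'. *)

Set Implicit Arguments.
Unset Strict Implicit.
Unset Printing Implicit Defensive.
Local Open Scope ring_scope.

Definition lin_closed (F : fieldType) (X : lmodType F) (U : X -> Prop) : Prop :=
  U 0 /\ forall (a : F) x y, U x -> U y -> U (a *: x + y).

(* [GRing.Theory] is imported only inside sections: globally it would shadow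
   [Defs.multiplicative] by [GRing.Theory.multiplicative]. *)
Section Span.
Import GRing.Theory.
Variables (F : fieldType) (X Z : lmodType F).

Definition in_span (T : Type) (u : T -> X) (P : T -> Prop) (z : X) : Prop :=
  exists m (f : 'I_m -> T) (c : 'I_m -> F),
    (forall k, P (f k)) /\ z = \sum_(k < m) c k *: u (f k).

Lemma lin_closed_sum (U : Z -> Prop) m (g : 'I_m -> Z) (c : 'I_m -> F) :
  lin_closed U -> (forall k, U (g k)) -> U (\sum_(k < m) c k *: g k).
Proof.
case=> U0 UD; elim: m g c => [|m IH] g c Ug; first by rewrite big_ord0.
by rewrite big_ord_recr /= addrC; apply: UD => //; apply: IH.
Qed.

Lemma linear_lincomb (g : X -> Z) m (y : 'I_m -> X) (c : 'I_m -> F) :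
  linear g -> g (\sum_(k < m) c k *: y k) = \sum_(k < m) c k *: g (y k).
Proof.
move=> g_lin; elim: m y c => [|m IH] y c.
  have := g_lin 1 0 0; rewrite !scale1r addr0 -{1}[g 0]add0r => /addIr.
  by rewrite !big_ord0 => <-.
by rewrite !big_ord_recr /= addrC g_lin IH addrC.
Qed.

Lemma in_span_image (T : Type) (u : T -> X) (P : T -> Prop) (U : Z -> Prop) (g : X -> Z) z :
  lin_closed U -> linear g -> (forall b, P b -> U (g (u b))) -> in_span u P z -> U (g z).
Proof.
move=> U_lin g_lin Ug [m [f [c [Pf ->]]]].
rewrite linear_lincomb //; apply: (lin_closed_sum (g := fun k => g (u (f k)))) => // k.
exact: Ug.
Qed.

Lemma in_span_lin_closed (T : Type) (u : T -> X) (P : T -> Prop) :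
  lin_closed (in_span u P).
Proof.
split.
  exists 0%N, (fun k : 'I_0 => False_rect T (notF (ltn_ord k))), (fun _ => 0).
  by rewrite big_ord0; split=> // -[].
move=> a _ _ [m1 [f1 [c1 [P1 ->]]]] [m2 [f2 [c2 [P2 ->]]]].
exists (m1 + m2)%N, (fun k => match split k with inl k1 => f1 k1 | inr k2 => f2 k2 end),
  (fun k => match split k with inl k1 => a * c1 k1 | inr k2 => c2 k2 end).
split=> [k|]; first by case: (split k).
rewrite big_split_ord scaler_sumr; congr (_ + _); apply: eq_bigr => k _.
  by rewrite (unsplitK (inl k)) scalerA.
by rewrite (unsplitK (inr k)).
Qed.

Lemma in_span_gen (T : Type) (u : T -> X) (P : T -> Prop) b : P b -> in_span u P (u b).
Proof. by move=> Pb; exists 1%N, (fun _ => b), (fun _ => 1); rewrite big_ord1 scale1r. Qed.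

End Span.

Lemma upd_id (T : Type) m (x : 'I_m -> T) l : upd x l (x l) = x.
Proof. by apply/funext => l'; rewrite /upd; case: eqP => [->|]. Qed.

Section MultilinearExpansion.
Import GRing.Theory.
Variables (F : fieldType) (X Z : lmodType F) (T : Type) (u : T -> X) (m : nat).
Variables (B : ('I_m -> X) -> Z) (U : Z -> Prop) (P : 'I_m -> T -> Prop).
Hypothesis B_multilinear : forall x l (a : F) y y',
  B (upd x l (a *: y + y')) = a *: B (upd x l y) + B (upd x l y').
Hypothesis U_lin : lin_closed U.
Hypothesis U_gen : forall ix, (forall l, P l (ix l)) -> U (B (u \o ix)).

Lemma multilinear_in_span x : (forall l, in_span u (P l) (x l)) -> U (B x).
Proof.
suff expand p : forall x, (forall l, in_span u (P l) (x l)) ->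
    (forall l : 'I_m, (p <= l)%N -> exists b, P l b /\ x l = u b) -> U (B x).
  by move=> Sx; apply: (expand m) => // l; rewrite leqNgt ltn_ord.
elim: p => [|p IH] {}x Sx Gx.
  have [ix Hix] := choice (fun l => Gx l isT).
  have -> : x = u \o ix by apply/funext => l; case: (Hix l).
  by apply: U_gen => l; case: (Hix l).
have [p_lt_m|m_le_p] := ltnP p m; last first.
  by apply: IH => // l p_le_l; move: (ltn_ord l); rewrite ltnNge (leq_trans m_le_p).
pose l0 := Ordinal p_lt_m.
have B_lin : linear (fun y => B (upd x l0 y)) by move=> a y y'; apply: B_multilinear.
rewrite -[x in B x](upd_id x l0); apply: (in_span_image U_lin B_lin) => // b Pb.
apply: IH => l; rewrite /upd; case: eqP => [->|ne_l] //.
- exact: in_span_gen.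
- by exists b.
- move=> p_le_l; apply: Gx; rewrite ltn_neqAle p_le_l andbT.
  by apply/eqP => eq_pl; apply: ne_l; apply: val_inj.
Qed.

End MultilinearExpansion.

Section Independence.
Import GRing.Theory.
Variables (F : fieldType) (V : lmodType F).

Definition independent (T : Type) (u : T -> V) : Prop :=
  forall m (f : 'I_m -> T) (c : 'I_m -> F), injective f ->
    \sum_(l < m) c l *: u (f l) = 0 -> forall l, c l = 0.

Lemma basis_independent (T : Type) (u : T -> V) : is_basis u -> independent u.
Proof. by case. Qed.

Lemma basis_in_span (T : Type) (u : T -> V) z : is_basis u -> in_span u (fun _ => True) z.
Proof. by case=> /(_ z) [m [f [c ->]]] _; exists m, f, c. Qed.

Lemma independent_uniq (T : eqType) (u : T -> V) (s : seq T) (d : T -> F) :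
  independent u -> uniq s -> \sum_(y <- s) d y *: u y = 0 -> {in s, forall y, d y = 0}.
Proof.
move=> u_ind s_uniq; rewrite big_tnth => S0 y y_in_s.
have /tnthP [k ->] : y \in in_tuple s by [].
by apply: (u_ind _ _ (fun k => d (tnth (in_tuple s) k))) S0 k; apply/tuple_uniqP.
Qed.

Lemma sum_undup (T : eqType) (u : T -> V) m (f : 'I_m -> T) (c : 'I_m -> F) :
  \sum_(l < m) c l *: u (f l) =
  \sum_(y <- undup [seq f l | l <- enum 'I_m]) (\sum_(l < m | f l == y) c l) *: u y.
Proof.
set s := undup _; under [RHS]eq_bigr => y _ do rewrite scaler_suml big_mkcond.
rewrite exchange_big /=; apply: eq_bigr => l _.
have fl_in_s : f l \in s by rewrite mem_undup map_f ?mem_enum.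
rewrite (bigD1_seq (f l)) ?undup_uniq //= eqxx big1 ?addr0 // => y.
by rewrite eq_sym => /negPf ->.
Qed.

Lemma independent_span_mem (T : eqType) (u : T -> V) (P : T -> Prop) x :
  independent u -> in_span u P (u x) -> P x.
Proof.
move=> u_ind [m [f [c [Pf E]]]]; apply: contrapT => nPx.
pose s := undup [seq f l | l <- enum 'I_m].
pose d y := \sum_(l < m | f l == y) c l.
pose e y := if y == x then 1 else - d y.
have x_notin_s : x \notin s.
  by rewrite mem_undup; apply/mapP => -[l _ xfl]; apply: nPx; rewrite xfl.
have S0 : \sum_(y <- x :: s) e y *: u y = 0.
  rewrite big_cons /e eqxx scale1r (eq_big_seq (fun y => - (d y *: u y))).
    by rewrite sumrN -sum_undup -E subrr.
  by move=> y y_in_s; case: eqP y_in_s => [->|_ _]; [rewrite (negPf x_notin_s) | rewrite scaleNr].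
have xs_uniq : uniq (x :: s) by rewrite /= x_notin_s undup_uniq.
have := independent_uniq u_ind xs_uniq S0 (mem_head x s).
by rewrite /e eqxx => /eqP; rewrite oner_eq0.
Qed.

End Independence.

Lemma kcons_eta (T : Type) km1 (x : 'I_km1.+1 -> T) : kcons (x ord0) (fun l => x (lift ord0 l)) = x.
Proof. by apply/funext => l; rewrite /kcons; case: unliftP => [j ->|->]. Qed.

Section Connectivity.
Variables (F : fieldType) (V W : lmodType F) (n km1 : nat) (I J : Type).
Variable br : 'S_n -> ('I_km1.+1 -> V) -> ('I_(n - km1.+1) -> W) -> V.
Variables (v : I -> V) (w : J -> W).

Lemma conn_seq_rcons A s i X Y r :
  conn_seq br v w A s i -> mu br v w i X Y r -> conn_seq br v w A (rcons s (X, Y)) r.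
Proof.
elim: s A => [|p s IH] A //=; case: s IH => [|q s] IH /=.
  by move=> Ai mu_i; split; [exists i | exists i].
by case=> ne_A conn_s mu_i; split=> //; apply: IH.
Qed.

Lemma connected_mu i j X Y r :
  connected br v w i j -> mu br v w j X Y r -> connected br v w i r.
Proof.
case=> [<-|[s conn_s]] mu_j; right; first by exists [:: (X, Y)]; exists i.
by exists (rcons s (X, Y)); apply: conn_seq_rcons conn_s mu_j.
Qed.

Lemma bracket_basis_in_span i s (ix : 'I_km1.+1 -> I) js :
  multiplicative br v w -> connected br v w i (ix ord0) ->
  in_span v (connected br v w i) (br s (v \o ix) (w \o js)).
Proof.
move=> /(_ s ix js) [r [c E]] conn_i.
have [->|nz] := eqVneq (br s (v \o ix) (w \o js)) 0.
  exact: (in_span_lin_closed v _).1.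
exists 1%N, (fun _ => r), (fun _ => c); rewrite E big_ord1; split=> // _.
apply: (connected_mu (X := fun l => inl (ix (lift ord0 l))) (Y := fun l => inl (js l)) conn_i).
left; exists (fun l => ix (lift ord0 l)), js; do 2!split=> //.
by exists s; rewrite kcons_eta; split; [exact/eqP | exists c].
Qed.

Lemma connected_span_submodule i :
  multilinear br -> is_basis v -> is_basis w -> multiplicative br v w ->
  is_submodule br (in_span v (connected br v w i)).
Proof.
move=> [br_linX br_linY] v_basis w_basis br_mult.
have span_lin := in_span_lin_closed v (connected br v w i).
split; first exact: span_lin.1; split; first exact: span_lin.2.
move=> s u xs y u_span.
pose P (l : 'I_km1.+1) b := if unlift ord0 l is Some _ then True else connected br v w i b.
apply: (multilinear_in_span (B := br s^~ y) (P := P)) => // [ix Pix|l].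
  apply: (multilinear_in_span (B := br s (v \o ix)) (P := fun _ _ => True)) => // [js _|l].
    by apply: bracket_basis_in_span => //; move: (Pix ord0); rewrite /P unlift_none.
  exact: basis_in_span.
by rewrite /kcons /P; case: unliftP => [j _|_] //; apply: basis_in_span.
Qed.

End Connectivity.

Theorem mainTheorem8 (F : fieldType) (V W : lmodType F) (n km1 : nat)
  (I J : Type)
  (br : 'S_n -> ('I_km1.+1 -> V) -> ('I_(n - km1.+1) -> W) -> V)
  (v : I -> V) (w : J -> W) :
  (2 <= n)%N -> (km1.+1 <= n)%N ->
  multilinear br -> is_basis v -> is_basis w ->
  multiplicative br v w -> is_simple br ->
  forall i i' : I, connected br v w i i'.
Proof.
move=> _ _ br_lin v_basis w_basis br_mult br_simple i i'.
have v_ind : independent (v : {classic I} -> V) := basis_independent v_basis.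
have vi_span : in_span v (connected br v w i) (v i) by apply: in_span_gen; left.
have [span_0|span_all] := br_simple _ (connected_span_submodule i br_lin v_basis w_basis br_mult).
  have vi_0 : in_span v (fun _ => False) (v i).
    by rewrite ((span_0 _).1 vi_span); apply: (in_span_lin_closed v _).1.
  by have := independent_span_mem v_ind vi_0.
exact: independent_span_mem v_ind (span_all (v i')).
Qed.
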